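(* Let $q$ be a self-join-free Boolean conjunctive query, let $q_0\subseteq q$, let $\mathbf{db}$ be a database, and let $\mathbf{o}$ be a garbage set for $q_0$ in $\mathbf{db}$. Then every garbage set for $q_0$ in $\mathbf{db}\setminus\mathbf{o}$ is empty if and only if $\mathbf{o}$ is the maximal (with respect to $\subseteq$) garbage set for $q_0$ in $\mathbf{db}$.
   Context: Every relation name has a signature $[n,k]$ ($1\le k\le n$; primary-key positions $1,\dots,k$) and a mode in $\{\mathsf{c},\mathsf{i}\}$. Facts are variable-free atoms; facts are key-equal if same relation name and same primary-key values. A database is a finite set of facts with no two distinct key-equal facts of mode $\mathsf{c}$, all of whose relation names occur in $q$. The block of a fact $A$ in $\mathbf{db}$ is the set of facts of $\mathbf{db}$ key-equal to $A$. A repair of a set of facts is a maximal subset without two distinct key-equal facts. A self-join-free Boolean conjunctive query is a finite set of atoms with distinct relation names; for a fact $A$, $\mathrm{atom}(A)$ is the atom of $q$ with the same relation name. A subset $\mathbf{o}\subseteq\mathbf{db}$ is a garbage set for $q_0$ in $\mathbf{db}$ if (1) for every $A\in\mathbf{o}$, $\mathrm{atom}(A)\in q_0$ and the block of $A$ in $\mathbf{db}$ is included in $\mathbf{o}$; and (2) there is a repair $\mathbf{r}$ of $\mathbf{o}$ such that for every valuation $\theta$ of the variables of $q$, if $\theta(q)\subseteq(\mathbf{db}\setminus\mathbf{o})\cup\mathbf{r}$ then $\theta(q_0)\cap\mathbf{r}=\emptyset$. Garbage sets are closed under union, so a unique maximal garbage set exists. *)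

From Stdlib Require Import List Arith.
Import ListNotations.

(* Modes: c (consistent) and i (possibly inconsistent). *)
Inductive mode := ModeC | ModeI.

Record relname := RelName
  { rn_id : nat; rn_arity : nat; rn_key : nat; rn_mode : mode }.

Definition wf_relname (R : relname) : Prop :=
  1 <= rn_key R /\ rn_key R <= rn_arity R.

Inductive term := TVar (x : nat) | TConst (c : nat).

Record atom := Atom { a_rel : relname; a_args : list term }.

Record fact := Fact { f_rel : relname; f_args : list nat }.

Definition key_equal (A B : fact) : Prop :=
  f_rel A = f_rel B /\
  firstn (rn_key (f_rel A)) (f_args A) = firstn (rn_key (f_rel B)) (f_args B).

Definition fset := fact -> Prop.
Definition subset (X Y : fset) : Prop := forall A, X A -> Y A.
Definition setD (X Y : fset) : fset := fun A => X A /\ ~ Y A.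
Definition setU (X Y : fset) : fset := fun A => X A \/ Y A.
Definition finite_fset (X : fset) : Prop :=
  exists s : list fact, forall A, X A <-> In A s.

Definition sjf_query (q : list atom) : Prop :=
  NoDup (map a_rel q) /\
  (forall a, In a q -> wf_relname (a_rel a) /\ length (a_args a) = rn_arity (a_rel a)).

Definition database (q : list atom) (db : fset) : Prop :=
  finite_fset db /\
  (forall A, db A -> length (f_args A) = rn_arity (f_rel A)) /\
  (forall A, db A -> exists a, In a q /\ a_rel a = f_rel A) /\
  (forall A B, db A -> db B -> rn_mode (f_rel A) = ModeC -> key_equal A B -> A = B).

Definition block (db : fset) (A : fact) : fset := fun B => db B /\ key_equal A B.

Definition consistent (X : fset) : Prop :=
  forall A B, X A -> X B -> key_equal A B -> A = B.

Definition repair (S r : fset) : Prop :=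
  subset r S /\ consistent r /\
  (forall r', subset r r' -> subset r' S -> consistent r' -> subset r' r).

Definition valuation := nat -> nat.
Definition val_term (th : valuation) (t : term) : nat :=
  match t with TVar x => th x | TConst c => c end.
Definition val_atom (th : valuation) (a : atom) : fact :=
  Fact (a_rel a) (map (val_term th) (a_args a)).

(* atom(A) belongs to q0: the atom of q with the relation name of A is in q0. *)
Definition atom_in (q q0 : list atom) (A : fact) : Prop :=
  exists a, In a q /\ a_rel a = f_rel A /\ In a q0.

Definition garbage_set (q q0 : list atom) (db o : fset) : Prop :=
  subset o db /\
  (forall A, o A -> atom_in q q0 A /\ subset (block db A) o) /\
  exists r, repair o r /\
    forall th : valuation,
      (forall a, In a q -> setU (setD db o) r (val_atom th a)) ->
      forall a, In a q0 -> ~ r (val_atom th a).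

Definition max_garbage_set (q q0 : list atom) (db o : fset) : Prop :=
  garbage_set q q0 db o /\
  forall o', garbage_set q q0 db o' -> subset o' o.

(* If [o] is a garbage set, a garbage set [o'] of [db \ o] can be added to it: [o] and [o'] share
   no block, so a repair of [o ∪ o'] is the union of repairs of [o] and [o'], and self-join-freeness
   forces every valuation avoiding the repair of [o] on [q0] to avoid it on all of [q]. Conversely,
   removing [o] from any garbage set [o''] leaves a garbage set of [db \ o]. Hence [db \ o] has only
   the empty garbage set exactly when [o] already contains every garbage set of [db]. *)
From Stdlib Require Import List Classical.

Lemma key_equal_sym (A B : fact) : key_equal A B -> key_equal B A.
Proof. intros [Hrel Hkey]. split; [|rewrite Hrel in *]; congruence. Qed.

Lemma NoDup_map_inj {X Y} (f : X -> Y) (l : list X) (x y : X) :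
  NoDup (map f l) -> In x l -> In y l -> f x = f y -> x = y.
Proof.
  induction l as [|z l IH]; simpl; [tauto|].
  intros Hnd Hx Hy Hf. inversion Hnd as [|? ? Hz Hnd']; subst.
  destruct Hx as [<-|Hx], Hy as [<-|Hy]; auto;
    exfalso; apply Hz; [rewrite Hf|rewrite <- Hf]; apply in_map; assumption.
Qed.

Definition block_closed (db o : fset) : Prop :=
  forall A, o A -> subset (block db A) o.

Definition key_separated (X Y : fset) : Prop :=
  forall A B, X A -> Y B -> ~ key_equal A B.

Lemma block_closed_separated (db o Y : fset) :
  block_closed db o -> subset Y (setD db o) -> key_separated o Y.
Proof.
  intros Ho HY A B HA HB Hkey. destruct (HY B HB) as [HdbB HoB].
  apply HoB, (Ho A HA). split; assumption.
Qed.

Lemma consistent_setU (X Y : fset) :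
  consistent X -> consistent Y ->
  (forall A B, X A -> Y B -> key_equal A B -> A = B) -> consistent (setU X Y).
Proof.
  intros HX HY Hcross A B [HA|HA] [HB|HB] Hkey; auto.
  symmetry. apply Hcross; [..|apply key_equal_sym]; assumption.
Qed.

Lemma repair_maximal (X rX r : fset) :
  repair X rX -> subset rX r -> consistent r -> forall A, r A -> X A -> rX A.
Proof.
  intros [HrX [_ Hm]] Hle Hc A HA HXA. apply (Hm (fun B => r B /\ X B)).
  - intros B HB. split; [apply Hle|apply HrX]; exact HB.
  - intros B [_ HB]; exact HB.
  - intros B C [HB _] [HC _]. apply Hc; assumption.
  - split; assumption.
Qed.

Lemma repair_setU (X Y rX rY : fset) :
  key_separated X Y -> repair X rX -> repair Y rY -> repair (setU X Y) (setU rX rY).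
Proof.
  intros Hsep HX HY. pose proof HX as [HrX [HcX _]]. pose proof HY as [HrY [HcY _]].
  split; [|split].
  - intros A [HA|HA]; [left|right]; auto.
  - apply consistent_setU; auto.
    intros A B HA HB Hkey. exfalso. exact (Hsep A B (HrX A HA) (HrY B HB) Hkey).
  - intros r Hle Hsub Hc A HA. destruct (Hsub A HA) as [HXA|HYA]; [left|right].
    + apply (repair_maximal X rX r); auto. intros B HB; apply Hle; left; exact HB.
    + apply (repair_maximal Y rY r); auto. intros B HB; apply Hle; right; exact HB.
Qed.

Lemma repair_setD (S T r : fset) :
  key_separated T (setD S T) -> repair S r -> repair (setD S T) (setD r T).
Proof.
  intros Hsep Hr. pose proof Hr as [HrS [Hc _]]. split; [|split].
  - intros A [HA HnA]. split; auto.
  - intros A B [HA _] [HB _]. apply Hc; assumption.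
  - intros r' Hle Hsub Hc' A HA.
    assert (Hcross : forall B C, r B -> r' C -> key_equal B C -> B = C).
    { intros B C HB HC Hkey. destruct (classic (T B)) as [HTB|HnTB].
      - exfalso. exact (Hsep B C HTB (Hsub C HC) Hkey).
      - apply Hc'; [apply Hle; split| |]; assumption. }
    split; [|exact (proj2 (Hsub A HA))].
    apply (repair_maximal S r (setU r r') Hr); [..|right; exact HA|exact (proj1 (Hsub A HA))].
    + intros B HB; left; exact HB.
    + apply consistent_setU; assumption.
Qed.

Definition avoids (q q0 : list atom) (U r : fset) : Prop :=
  forall th : valuation,
    (forall a, In a q -> U (val_atom th a)) -> forall a, In a q0 -> ~ r (val_atom th a).

Lemma avoids_subset (q q0 : list atom) (U U' r r' : fset) :
  subset U' U -> subset r' r -> avoids q q0 U r -> avoids q q0 U' r'.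
Proof.
  intros HU Hr Hav th Hth a Ha Hra. apply (Hav th) with a; auto.
Qed.

(* Self-join-freeness: a fact of [r] can only be the image of the atom of its own relation name. *)
Lemma avoids_all_atoms (q q0 : list atom) (U r : fset) :
  NoDup (map a_rel q) -> (forall A, r A -> atom_in q q0 A) ->
  avoids q q0 U r -> avoids q q U r.
Proof.
  intros Hsjf Hr Hav th Hth a Ha Hra.
  destruct (Hr _ Hra) as [a' [Ha' [Hrel Ha'0]]].
  assert (a' = a) as -> by exact (NoDup_map_inj a_rel q a' a Hsjf Ha' Ha Hrel).
  exact (Hav th Hth a Ha'0 Hra).
Qed.

Lemma garbage_set_block_closed (q q0 : list atom) (db o : fset) :
  garbage_set q q0 db o -> block_closed db o.
Proof. intros [_ [Ho _]] A HA. apply Ho, HA. Qed.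

Lemma garbage_set_setD (q q0 : list atom) (db o o'' : fset) :
  block_closed db o -> garbage_set q q0 db o'' ->
  garbage_set q q0 (setD db o) (setD o'' o).
Proof.
  intros Ho [Hsub [Hblk [r [Hr Hav]]]]. split; [|split].
  - intros A [HA HnA]. split; auto.
  - intros A [HA _]. split; [apply Hblk, HA|].
    intros B [[HdbB HnB] Hkey]. split; [apply (Hblk A HA); split|]; assumption.
  - exists (setD r o). split.
    + apply repair_setD; [|exact Hr].
      apply (block_closed_separated db); [exact Ho|].
      intros A [HA HnA]. split; auto.
    + apply (avoids_subset q q0 (setU (setD db o'') r) _ r); [| |exact Hav].
      * intros A [[[HdbA HnoA] Hn]|[HrA _]]; [left|right; exact HrA].
        split; [exact HdbA|]. intros HA. apply Hn. split; assumption.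
      * intros A [HA _]; exact HA.
Qed.

Lemma avoids_setU (q q0 : list atom) (db o o' r r' : fset) :
  NoDup (map a_rel q) -> (forall A, r A -> atom_in q q0 A) ->
  subset r' o' -> subset o' (setD db o) ->
  avoids q q0 (setU (setD db o) r) r -> avoids q q0 (setU (setD (setD db o) o') r') r' ->
  avoids q q0 (setU (setD db (setU o o')) (setU r r')) (setU r r').
Proof.
  intros Hsjf Hr_q0 Hr'o' Ho' Hav Hav'.
  assert (HU : subset (setU (setD db (setU o o')) (setU r r')) (setU (setD db o) r)).
  { intros A [[HdbA Hn]|[HA|HA]]; [left| |left; apply Ho', Hr'o', HA].
    - split; [exact HdbA|]. intros HoA; apply Hn; left; exact HoA.
    - right; exact HA. }
  assert (Hav_r := avoids_subset q q0 _ _ r r HU (fun A HA => HA) Hav).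
  intros th Hth a Ha0 [Hra|Hra]; [exact (Hav_r th Hth a Ha0 Hra)|].
  assert (Hno := avoids_all_atoms q q0 _ r Hsjf Hr_q0 Hav_r th Hth).
  apply (Hav' th) with a; [|exact Ha0|exact Hra].
  intros b Hb. destruct (Hth b Hb) as [[HdbB Hn]|[HrB|HrB]].
  - left. split; [split; [exact HdbB|]|]; intros H; apply Hn; [left|right]; exact H.
  - exfalso; exact (Hno b Hb HrB).
  - right; exact HrB.
Qed.

Lemma garbage_set_setU (q q0 : list atom) (db o o' : fset) :
  sjf_query q -> garbage_set q q0 db o -> garbage_set q q0 (setD db o) o' ->
  garbage_set q q0 db (setU o o').
Proof.
  intros [Hsjf _] Ho [Hsub' [Hblk' [r' [Hr' Hav']]]].
  assert (Hsep := block_closed_separated db o o' (garbage_set_block_closed _ _ _ _ Ho) Hsub').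
  destruct Ho as [Hsub [Hblk [r [Hr Hav]]]].
  split; [|split].
  - intros A [HA|HA]; [apply Hsub|apply Hsub']; assumption.
  - intros A [HA|HA]; split; try (apply Hblk + apply Hblk'; exact HA).
    + intros B HB; left; apply (Hblk A HA); exact HB.
    + intros B [HdbB Hkey]. destruct (classic (o B)) as [HoB|HnoB]; [left; exact HoB|right].
      apply (Hblk' A HA). split; [split|]; assumption.
  - exists (setU r r'). split; [apply repair_setU; assumption|].
    apply (avoids_setU q q0 db o o' r r'); try assumption.
    + intros A HA. apply Hblk, (proj1 Hr), HA.
    + exact (proj1 Hr').
Qed.

Theorem lemma17 (q q0 : list atom) (db o : fset) :
  sjf_query q -> incl q0 q -> database q db -> garbage_set q q0 db o ->
  ((forall o' : fset, garbage_set q q0 (setD db o) o' -> forall A, ~ o' A) <->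
   max_garbage_set q q0 db o).
Proof.
  intros Hq _ _ Ho. split.
  - intros Hempty. split; [exact Ho|].
    intros o'' Ho'' A HA. apply NNPP. intros HnA.
    exact (Hempty _ (garbage_set_setD q q0 db o o'' (garbage_set_block_closed _ _ _ _ Ho) Ho'')
                  A (conj HA HnA)).
  - intros [_ Hmax] o' Ho' A HA.
    assert (Hle : subset (setU o o') o) by exact (Hmax _ (garbage_set_setU q q0 db o o' Hq Ho Ho')).
    destruct Ho' as [Hsub' _].
    exact (proj2 (Hsub' A HA) (Hle A (or_intror HA))).
Qed.
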